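(* If $q$ is an integer with $q\equiv 1\pmod 4$ and $q\neq 1$, then $A_q(q+3,q+1)\le \tfrac12 q^2(q+1)-q=\tfrac12(q-1)q(q+2)$.
   Context: For an integer $q\ge2$ let $[q]=\{0,1,\dots,q-1\}$. For words $u,v\in[q]^n$, the Hamming distance $d_H(u,v)$ is the number of coordinates $i$ with $u_i\neq v_i$. The minimum distance of a code $C\subseteq[q]^n$ is the minimum Hamming distance between distinct codewords ($\infty$ if $|C|\le 1$). $A_q(n,d)$ is the maximum cardinality of a code $C\subseteq[q]^n$ with minimum distance at least $d$. *)

From mathcomp Require Import all_boot.
Set Implicit Arguments. Unset Strict Implicit. Unset Printing Implicit Defensive.

Definition word (q n : nat) := {ffun 'I_n -> 'I_q}.

Definition dH (q n : nat) (u v : word q n) : nat := #|[set i | u i != v i]|.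

(* C has minimum distance at least d (vacuous when |C| <= 1, i.e. min distance = oo). *)
Definition min_dist_ge (q n d : nat) (C : {set word q n}) : bool :=
  [forall u in C, forall v in C, (u != v) ==> (d <= dH u v)].

Definition Aq (q n d : nat) : nat :=
  \max_(C : {set word q n} | min_dist_ge d C) #|C|.

(* Let q = 4t+1 (t >= 1) and n = q+3.  A code C in [q]^n with minimum distance
   at least q+1 is one in which distinct codewords agree in at most 2 places.
   Put h = 2t+1 and K = q*h = q(q+1)/2; we show #|C| <= q*K - q.

   For a coordinate j and a symbol b, the class cls C j b collects the
   codewords with symbol b at j.  Counting agreements inside a class in two
   ways and applying Cauchy-Schwarz (resp. the tangent-line bound
   f^2 >= q f - q h (h-1)) to the symbol counts of the other coordinates shows
   that a class has at most K words, and bounds the number of ordered pairs of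
   the class agreeing in exactly one place by (K - s)(K - s - 1).
   If #|C| > q*K - q then, by pigeonhole, some class T is full (size K); in a
   full class every other coordinate is perfectly balanced, and a parity
   argument shows that every word outside T agrees in exactly one place with
   some word of T.  This yields at least 2(#|C| - K) pairs agreeing in one
   place, while summing the class bounds over all coordinates gives at most
   n r (r-1) of them with r = q*K - #|C| < q: a contradiction. *)

From mathcomp Require Import all_boot zify.
Set Implicit Arguments. Unset Strict Implicit. Unset Printing Implicit Defensive.

Lemma card_set_indicator (T : finType) (P : pred T) :
  #|[set i | P i]| = \sum_i (P i : nat).
Proof. by rewrite -sum1dep_card big_mkcond /=; apply: eq_bigr => i _; case: (P i). Qed.

Lemma sum_indicator (T : finType) (a : T) : \sum_(c : T) ((a == c) : nat) = 1.
Proof. by rewrite (bigD1 a) //= eqxx big1 // => c; rewrite eq_sym => /negbTE ->. Qed.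

Section Agreement.
Variables (q n : nat).
Implicit Types (u v x y : word q n) (D : {set word q n}).

Definition agr u v : nat := \sum_(k < n) (u k == v k).

Lemma dH_agr u v : dH u v + agr u v = n.
Proof.
rewrite /dH card_set_indicator /agr -big_split /=.
by rewrite (eq_bigr (fun _ => 1)) ?sum1_card ?card_ord // => i _; case: (u i == v i).
Qed.

Lemma agr_refl u : agr u u = n.
Proof. by rewrite /agr (eq_bigr (fun _ => 1)) ?sum1_card ?card_ord // => i _; rewrite eqxx. Qed.

Lemma agrC u v : agr u v = agr v u.
Proof. by apply: eq_bigr => i _; rewrite eq_sym. Qed.

Lemma agr_ge1 u v j : u j = v j -> 1 <= agr u v.
Proof. by move=> e; rewrite /agr (bigD1 j) //= e eqxx. Qed.

Definition sym_count D (k : 'I_n) (c : 'I_q) : nat := \sum_(x in D) (x k == c).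

Lemma sum_sym_count D k : \sum_c sym_count D k c = #|D|.
Proof.
by rewrite /sym_count exchange_big /= -sum1_card; apply: eq_bigr => x _; apply: sum_indicator.
Qed.

Lemma eq_indicator_split (a b : 'I_q) : ((a == b) : nat) = \sum_c ((a == c) * (b == c)).
Proof.
rewrite (bigD1 a) //= eqxx mul1n big1 ?addn0 ?(eq_sym b) // => c.
by rewrite eq_sym => /negbTE ->.
Qed.

Lemma sum_agr_pairs D :
  \sum_(x in D) \sum_(y in D) agr x y = \sum_k \sum_c sym_count D k c ^ 2.
Proof.
rewrite /agr.
under eq_bigr => x _ do rewrite exchange_big /=.
rewrite exchange_big /=; apply: eq_bigr => k _.
under eq_bigr => x _ do under eq_bigr => y _ do rewrite eq_indicator_split.
under eq_bigr => x _ do rewrite exchange_big /=.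
rewrite exchange_big /=; apply: eq_bigr => c _.
rewrite /sym_count expnS expn1 big_distrl /=; apply: eq_bigr => x _.
by rewrite big_distrr.
Qed.

Lemma sum_agr_with D y : \sum_(x in D) agr x y = \sum_k sym_count D k (y k).
Proof. by rewrite /agr exchange_big. Qed.

Definition cls D (j : 'I_n) (b : 'I_q) := [set x in D | x j == b].

Lemma cls_sub D j b : cls D j b \subset D.
Proof. by apply/subsetP => x; rewrite inE => /andP []. Qed.

Lemma cls_fixed D j b x : x \in cls D j b -> x j = b.
Proof. by rewrite inE => /andP [_ /eqP]. Qed.

Lemma card_cls D k c : #|cls D k c| = sym_count D k c.
Proof.
rewrite card_set_indicator /sym_count [RHS]big_mkcond /=; apply: eq_bigr => x _.
by case: (x \in D).
Qed.

Lemma sum_card_cls D k : \sum_c #|cls D k c| = #|D|.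
Proof. by rewrite -(sum_sym_count D k); apply: eq_bigr => c _; apply: card_cls. Qed.

Lemma sum_over_cls D k c (F : word q n -> nat) :
  \sum_(x in cls D k c) F x = \sum_(x in D) (x k == c) * F x.
Proof.
rewrite big_mkcond [RHS]big_mkcond /=; apply: eq_bigr => x _.
by rewrite inE; case: (x \in D); case: (x k == c); rewrite ?mul1n ?mul0n.
Qed.

Definition single_agr D := \sum_(x in D) \sum_(y in D) ((agr x y == 1) : nat).

(* A pair agreeing in exactly one coordinate lies in exactly one common class. *)
Lemma single_agr_cls D : single_agr D = \sum_k \sum_c single_agr (cls D k c).
Proof.
have split1 x y : ((agr x y == 1) : nat) =
    \sum_k \sum_c ((x k == c) * ((y k == c) * (agr x y == 1))).
  have E : ((agr x y == 1) : nat) = agr x y * (agr x y == 1).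
    by case: (agr x y == 1) /eqP => [->|_]; rewrite ?muln0.
  set F := ((agr x y == 1) : nat) in E *.
  rewrite {1}E {1}/agr big_distrl /=; apply: eq_bigr => k _.
  by rewrite eq_indicator_split big_distrl /=; apply: eq_bigr => c _; rewrite mulnA.
rewrite /single_agr.
under eq_bigr => x _ do under eq_bigr => y _ do rewrite split1.
under eq_bigr => x _ do rewrite exchange_big /=.
rewrite exchange_big /=; apply: eq_bigr => k _.
under eq_bigr => x _ do rewrite exchange_big /=.
rewrite exchange_big /=; apply: eq_bigr => c _.
rewrite sum_over_cls; apply: eq_bigr => x _.
by rewrite sum_over_cls big_distrr.
Qed.

(* In a class whose pairs agree in at most 2 places, every distinct pair agrees
   in exactly 1 or 2 places; this gives the total agreement count. *)
Lemma agr_in_class D j b : 1 < n -> (forall x, x \in D -> x j = b) ->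
  (forall x y, x \in D -> y \in D -> x != y -> agr x y <= 2) ->
  \sum_(x in D) \sum_(y in D) agr x y + single_agr D = #|D| * (n + 2 * #|D|.-1).
Proof.
move=> n_gt1 Dj agr2; rewrite /single_agr -big_split /= -sum_nat_const.
apply: eq_bigr => x xD.
rewrite -big_split /= (bigD1 x) //= agr_refl.
have -> : (n == 1) = false by apply/negbTE; rewrite neq_ltn n_gt1 orbT.
rewrite addn0; congr (_ + _).
rewrite (eq_bigr (fun _ => 2)); last first.
  move=> y /andP [yD yx].
  have := agr_ge1 (u := x) (v := y) (j := j); rewrite !Dj // => /(_ erefl) ge1.
  have := agr2 x y xD yD; rewrite eq_sym yx => /(_ isT) le2.
  by case: (agr x y) ge1 le2 => [|[|[|]]].
rewrite (eq_bigl (mem (D :\ x))) => [|y]; last by rewrite !inE andbC.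
by rewrite sum_nat_const (cardsD1 x D) xD mulnC.
Qed.

Lemma sym_count_fixed D j b : (forall x, x \in D -> x j = b) ->
  \sum_c sym_count D j c ^ 2 = #|D| ^ 2.
Proof.
move=> Dj; rewrite (bigD1 b) //= big1 ?addn0.
  by congr (_ ^ 2); rewrite /sym_count -sum1_card; apply: eq_bigr => x xD; rewrite Dj // eqxx.
by move=> c cb; rewrite /sym_count big1 // => x xD; rewrite Dj // eq_sym (negbTE cb).
Qed.

Lemma sum_other_coords (j : 'I_n) c : \sum_(k | k != j) c = n.-1 * c.
Proof.
have := sum_nat_const (mem 'I_n) c; rewrite (bigD1 j) //= card_ord.
by case: n j => [[]//|n'] j /=; rewrite mulSn => /eqP; rewrite eqn_add2l => /eqP.
Qed.

End Agreement.

Lemma cauchy_schwarz_seq (T : Type) (r : seq T) (f : T -> nat) :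
  (\sum_(i <- r) f i) ^ 2 <= (\sum_(i <- r) 1) * \sum_(i <- r) f i ^ 2.
Proof.
elim: r => [|a r IH]; first by rewrite !big_nil.
rewrite !big_cons.
move: IH; set S := \sum_(i <- r) f i; set k := \sum_(i <- r) 1.
set U := \sum_(i <- r) f i ^ 2 => IH.
have cross : 2 * k * f a * S <= k * k * f a ^ 2 + S ^ 2.
  have : 0 <= (k * f a - S) ^ 2 + (S - k * f a) ^ 2 by [].
  nia.
nia.
Qed.

Lemma cauchy_schwarz q (f : 'I_q -> nat) : (\sum_c f c) ^ 2 <= q * \sum_c f c ^ 2.
Proof. by have := cauchy_schwarz_seq (index_enum 'I_q) f; rewrite sum1_card card_ord. Qed.

(* Tangent-line bound: f^2 >= q f - q h (h-1) summed, from (f-h)(f-h+1) >= 0. *)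
Lemma tangent_bound q h (f : 'I_q -> nat) : q = (2 * h).-1 ->
  q * \sum_c f c <= \sum_c f c ^ 2 + q * (h * h.-1).
Proof.
move=> qh.
have -> : q * (h * h.-1) = \sum_(c : 'I_q) (h * h.-1) by rewrite sum_nat_const card_ord.
rewrite big_distrr -big_split /=; apply: leq_sum => c _.
have : 0 <= (f c - h) * (f c - h.-1) + (h - f c) * (h.-1 - f c) by [].
by case: h qh => [|h] ->; [rewrite muln0 mul0n | rewrite /=; nia].
Qed.

(* Closed-form arithmetic steps, for q = 4t+1, n = q+3, h = 2t+1, K = q*h.
   Here s is a class size, X the squared symbol counts of the other coordinates,
   Qd the number of pairs of the class agreeing in one place. *)

(* Cauchy-Schwarz forces s <= K. *)
Lemma class_size_arith t s X Qd : s ^ 2 + X + Qd = s * ((4*t+1) + 3 + 2 * s.-1) ->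
  (4*t+3) * s ^ 2 <= (4*t+1) * X -> s <= (4*t+1)*(2*t+1).
Proof.
move=> e h.
have e2 : X + Qd = s * s + (4*t+2) * s by case: s e {h} => [|s] /=; nia.
have h2 : 2 * s * s <= 2 * ((4*t+1)*(2*t+1)) * s by nia.
by case: s {e h e2} h2 => // s; rewrite leq_pmul2r //; lia.
Qed.

(* The tangent-line bound forces Qd <= (K-s)(K-s-1). *)
Lemma class_pairs_arith t s X Qd : s ^ 2 + X + Qd = s * ((4*t+1) + 3 + 2 * s.-1) ->
  (4*t+3) * ((4*t+1) * s) <= X + (4*t+3) * ((4*t+1) * ((2*t+1) * (2*t))) ->
  s <= (4*t+1)*(2*t+1) ->
  Qd <= ((4*t+1)*(2*t+1) - s) * ((4*t+1)*(2*t+1) - s).-1.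
Proof.
move=> e h hs.
have e2 : X + Qd = s * s + (4*t+2) * s by case: s e {h hs} => [|s] /=; nia.
have [d ed] : exists d, d + s = (4*t+1)*(2*t+1) by exists ((4*t+1)*(2*t+1) - s); rewrite subnK.
have -> : (4*t+1)*(2*t+1) - s = d by lia.
by case: d ed => [|d] /= ed; nia.
Qed.

(* For a full class (s = K) the slack E of the tangent-line bound vanishes. *)
Lemma full_class_arith t s X Qd E : s = (4*t+1)*(2*t+1) ->
  s ^ 2 + X + Qd = s * ((4*t+1) + 3 + 2 * s.-1) ->
  E + (4*t+3) * (2 * (2*t+1) * s) = X + (4*t+3) * ((4*t+1) * (2*t+1) ^ 2) -> E = 0.
Proof.
move=> -> e1 e2.
have e3 : X + Qd = (4*t+1)*(2*t+1) * ((4*t+1)*(2*t+1)) + (4*t+2) * ((4*t+1)*(2*t+1)).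
  by move: e1; rewrite addn1 /= -addnA; nia.
nia.
Qed.

(* With r = qK - M < q, the lower bound 2(M-K) on single agreements exceeds the
   upper bound n r (r-1). *)
Lemma excess_arith t M r : 1 <= t -> r + M = (4*t+1) * ((4*t+1)*(2*t+1)) ->
  (4*t+1) * ((4*t+1)*(2*t+1)) - (4*t+1) < M ->
  2 * (M - (4*t+1)*(2*t+1)) <= (4*t+1+3) * (r * r.-1) -> False.
Proof.
move=> t1 e h1 h2.
have hr : r <= 4 * t by lia.
have h3 : r * r.-1 <= r * (4*t).-1 by apply: leq_mul => //; lia.
have h4 : (4*t+1+3) * (r * r.-1) <= (4*t+4) * (4*t) * (4*t).-1.
  rewrite (_ : 4*t+1+3 = 4*t+4); last by lia.
  by rewrite -mulnA; apply: leq_mul => //; apply: leq_trans h3 _; apply: leq_mul.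
have h5 : 2 * (4 * t * ((4*t+1)*(2*t+1)) - 4 * t) <= 2 * (M - (4*t+1)*(2*t+1)) by nia.
have h6 := leq_trans h5 (leq_trans h2 h4).
by case: t t1 h6 {e h1 h2 hr h3 h4 h5} => // t _; rewrite /=; nia.
Qed.

Section Code.
Variable t : nat.
Local Notation q := (4*t+1).
Local Notation n := (4*t+1+3).
Local Notation h := (2*t+1).
Local Notation K := ((4*t+1)*(2*t+1)).
Variable C : {set word q n}.
Hypothesis agr_le2 : forall x y, x \in C -> y \in C -> x != y -> agr x y <= 2.

(* The three relations satisfied by a class: the agreement identity, and the
   Cauchy-Schwarz and tangent-line bounds on the other coordinates. *)
Lemma class_facts j b :
  let s := #|cls C j b| in
  let X := \sum_(k | k != j) \sum_c sym_count (cls C j b) k c ^ 2 in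
  [/\ s ^ 2 + X + single_agr (cls C j b) = s * (q + 3 + 2 * s.-1),
      (4*t+3) * s ^ 2 <= q * X
    & (4*t+3) * (q * s) <= X + (4*t+3) * (q * (h * (2*t)))].
Proof.
move=> s X; split.
- have fixed x : x \in cls C j b -> x j = b by apply: cls_fixed.
  have agr2 x y : x \in cls C j b -> y \in cls C j b -> x != y -> agr x y <= 2.
    by move=> /(subsetP (cls_sub C j b)) xC /(subsetP (cls_sub C j b)); apply: agr_le2.
  have := agr_in_class (_ : 1 < n) fixed agr2.
  by rewrite sum_agr_pairs (bigD1 j) //= (sym_count_fixed fixed); apply; lia.
- have -> : (4*t+3) * s ^ 2 = \sum_(k | k != j) s ^ 2.
    by rewrite sum_other_coords; congr (_ * _); lia.
  rewrite /X big_distrr /=; apply: leq_sum => k _.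
  by have := cauchy_schwarz (sym_count (cls C j b) k); rewrite sum_sym_count.
- rewrite (_ : 4*t+3 = n.-1); last by lia.
  rewrite -!(sum_other_coords j) /X -big_split /=.
  apply: leq_sum => k _.
  have := @tangent_bound q h (sym_count (cls C j b) k) (_ : q = (2 * h).-1).
  by rewrite sum_sym_count (_ : h.-1 = 2*t); [apply; lia | lia].
Qed.

Lemma class_bound j b :
  #|cls C j b| <= K /\ single_agr (cls C j b) <= (K - #|cls C j b|) * (K - #|cls C j b|).-1.
Proof.
have [e1 e2 e3] := class_facts j b.
have hs := class_size_arith e1 e2.
by split => //; apply: class_pairs_arith e1 e3 hs.
Qed.

Lemma full_class_balanced j b : #|cls C j b| = K ->
  forall k, k != j -> forall c, sym_count (cls C j b) k c = h.
Proof.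
move=> full.
have [e1 _ _] := class_facts j b.
set D := cls C j b in e1 full *.
pose slack k := \sum_c ((sym_count D k c - h) ^ 2 + (h - sym_count D k c) ^ 2).
have slack_eq k : slack k + 2 * h * #|D| = \sum_c sym_count D k c ^ 2 + q * h ^ 2.
  rewrite /slack -(sum_sym_count D k) big_distrr /=.
  have -> : q * h ^ 2 = \sum_(c : 'I_q) h ^ 2 by rewrite sum_nat_const card_ord.
  rewrite -!big_split /=; apply: eq_bigr => c _.
  case: (leqP (sym_count D k c) h) => hc.
    by have -> : sym_count D k c - h = 0; [lia | nia].
  by have -> : h - sym_count D k c = 0; [lia | nia].
have total : \sum_(k | k != j) slack k + (4*t+3) * (2 * h * #|D|) =
    \sum_(k | k != j) \sum_c sym_count D k c ^ 2 + (4*t+3) * (q * h ^ 2).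
  rewrite (_ : 4*t+3 = n.-1); last by lia.
  rewrite -!(sum_other_coords j) -!big_split /=.
  by apply: eq_bigr => k _; apply: slack_eq.
move=> k kj c.
move/eqP: (full_class_arith full e1 total).
rewrite sum_nat_eq0 => /forallP /(_ k); rewrite kj /= /slack.
rewrite sum_nat_eq0 => /forallP /(_ c) /=.
rewrite addn_eq0 !expn_eq0 !subn_eq0 /= !andbT => /andP [h1 h2].
by apply/eqP; rewrite eqn_leq h1 h2.
Qed.

Lemma deficit_sum k : \sum_c (K - #|cls C k c|) + #|C| = q * K.
Proof.
rewrite -(sum_card_cls C k) -big_split /=.
have -> : q * K = \sum_(c : 'I_q) K by rewrite sum_nat_const card_ord.
by apply: eq_bigr => c _; rewrite subnK //; case: (class_bound k c).
Qed.

Lemma full_class_exists j : q * K - q < #|C| -> exists a, #|cls C j a| = K.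
Proof.
move=> large.
case: (pickP (fun a => #|cls C j a| == K)) => [a /eqP full | none]; first by exists a.
have : #|C| <= q * K.-1.
  have -> : q * K.-1 = \sum_(c : 'I_q) K.-1 by rewrite sum_nat_const card_ord.
  rewrite -(sum_card_cls C j); apply: leq_sum => c _.
  by have [+ _] := class_bound j c; move: (none c) => /negbT; lia.
by move: large; rewrite -subn1 mulnBr muln1; lia.
Qed.

(* A word outside a full class has odd total agreement with it. *)
Lemma agr_full_class j a (y : word q n) : #|cls C j a| = K -> y j != a ->
  \sum_(x in cls C j a) agr x y = (4*t+3) * h.
Proof.
move=> full ya.
rewrite sum_agr_with (bigD1 j) //=.
have -> : sym_count (cls C j a) j (y j) = 0.
  by rewrite /sym_count big1 // => x /cls_fixed ->; rewrite eq_sym (negbTE ya).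
rewrite (eq_bigr (fun _ => h)); last by move=> k kj; apply: full_class_balanced.
by rewrite sum_other_coords add0n; congr (_ * _); lia.
Qed.

(* Parity: a word outside a full class agrees in exactly one place with some
   member, since all other agreements are 0 or 2. *)
Lemma full_class_partner j a y : #|cls C j a| = K -> y \in C :\: cls C j a ->
  exists2 x, x \in cls C j a & agr x y = 1.
Proof.
move=> full; rewrite inE => /andP [yT yC].
have ya : y j != a by apply: contraNneq yT => e; rewrite inE yC e eqxx.
case: (pickP (fun x => (x \in cls C j a) && (agr x y == 1))) => [x /andP [xT /eqP e]|none].
  by exists x.
have : ~~ odd (\sum_(x in cls C j a) agr x y).
  apply: (big_ind (fun v => ~~ odd v)) => //.
    by move=> u v; rewrite oddD; case: (odd u); case: (odd v).
  move=> x xT; have := none x; rewrite xT /= => /negbT ne1.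
  have xy : x != y by apply: contraNneq yT => <-.
  have := agr_le2 (subsetP (cls_sub C j a) x xT) yC xy.
  by case: (agr x y) ne1 => [|[|[|]]].
rewrite agr_full_class //.
have -> : (4*t+3) * h = (4*t*t + 5*t + 1).*2 + 1 by rewrite -muln2; nia.
by rewrite oddD odd_double.
Qed.

(* Every word outside a full class T yields a single agreement with T in both
   orders, so there are at least 2 (|C| - K) single agreements. *)
Lemma single_agr_lower j a : #|cls C j a| = K -> 2 * (#|C| - K) <= single_agr C.
Proof.
move=> full; set T := cls C j a.
have TC : T \subset C := cls_sub C j a.
have card_out : #|C :\: T| = #|C| - K by rewrite cardsD (setIidPr TC) full.
have from_out : #|C :\: T| <= \sum_(x in C :\: T) \sum_(y in C) ((agr x y == 1) : nat).
  rewrite -sum1_card; apply: leq_sum => x xD.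
  have [x' x'T e] := full_class_partner full xD.
  by rewrite (bigD1 x') ?(subsetP TC) //= agrC e eqxx leq_addr.
have from_in : #|C :\: T| <= \sum_(x in T) \sum_(y in C) ((agr x y == 1) : nat).
  apply: leq_trans (_ : _ <= \sum_(x in T) \sum_(y in C :\: T) ((agr x y == 1) : nat)) _.
    rewrite exchange_big /= -sum1_card; apply: leq_sum => y yD.
    have [x xT e] := full_class_partner full yD.
    by rewrite (bigD1 x) //= e eqxx leq_addr.
  by apply: leq_sum => x _; rewrite [X in _ <= X](big_setID T) /=; apply: leq_addl.
rewrite /single_agr (big_setID T) /= (setIidPr TC) -card_out mul2n -addnn.
exact: leq_add from_in from_out.
Qed.

(* Summing the class bounds over all coordinates: at most n r (r-1) single
   agreements, where r = qK - |C|. *)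
Lemma single_agr_upper :
  single_agr C <= n * ((q * K - #|C|) * (q * K - #|C|).-1).
Proof.
set r := q * K - #|C|.
have per_coord k : \sum_c single_agr (cls C k c) <= r * r.-1.
  have dsum : \sum_c (K - #|cls C k c|) = r by have := deficit_sum k; rewrite /r; lia.
  apply: leq_trans (_ : _ <= \sum_c (K - #|cls C k c|) * r.-1) _; last first.
    by rewrite -big_distrl /= dsum.
  apply: leq_sum => c _; have [_ hQ] := class_bound k c.
  apply: leq_trans hQ _.
  have hd : K - #|cls C k c| <= r by rewrite -dsum (bigD1 c) //= leq_addr.
  by apply: leq_mul => //; lia.
have -> : n * (r * r.-1) = \sum_(k : 'I_n) (r * r.-1) by rewrite sum_nat_const card_ord.
by rewrite single_agr_cls; apply: leq_sum => k _; apply: per_coord.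
Qed.

Lemma code_bound : 1 <= t -> #|C| <= q * K - q.
Proof.
move=> t1; case: (leqP #|C| (q * K - q)) => // large; exfalso.
have j0 : 'I_n by apply: (@Ordinal _ 0); lia.
have [a full] := full_class_exists j0 large.
apply: (excess_arith t1 (_ : q * K - #|C| + #|C| = _) large).
  by have := deficit_sum j0; lia.
exact: leq_trans (single_agr_lower full) single_agr_upper.
Qed.

End Code.

Theorem corollary5p4 (q : nat) :
  q %% 4 = 1 -> q != 1 ->
  Aq q (q + 3) (q + 1) <= (q ^ 2 * (q + 1)) %/ 2 - q.
Proof.
move=> q4 q1.
have [t def_q] : exists t, q = 4*t+1.
  by exists (q %/ 4); rewrite {1}(divn_eq q 4) q4; lia.
subst q; have t1 : 1 <= t by move: q1 {q4}; case: t.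
have -> : (4*t+1) ^ 2 * (4*t+1+1) = ((4*t+1)*((4*t+1)*(2*t+1))) * 2 by nia.
rewrite mulnK // /Aq; apply/bigmax_leqP => C minC.
apply: code_bound => // x y xC yC xy.
move/forall_inP: minC => /(_ x xC) /forall_inP /(_ y yC) /implyP /(_ xy) dist.
by have := dH_agr x y; lia.
Qed.
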